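(* Let $A$ be a graded $R$-algebra and $M$ an $A$-bimodule such that $M$ is free as a left $A$-module on a generating graded $R$-module $X$, i.e. $M\cong A\otimes X$ as left $A$-modules, and the right $A$-action on $M$ satisfies $(a\otimes x)\cdot b-(-1)^{mn}ab\otimes x\in A\otimes X_{<m}$ for all $a\in A$, $x\in X_m$, $b\in A_n$ and $m,n\ge0$. Then $M$ is free as a right $A$-module.
   Context: $R$ is a commutative ring; gradings are nonnegative; $X_{<m}=\bigoplus_{j<m}X_j$; signs follow the Koszul convention. *)

From HB Require Import structures.
From mathcomp Require Import all_boot all_order all_algebra.
Set Implicit Arguments.
Unset Strict Implicit.
Unset Printing Implicit Defensive.
Import GRing.Theory.
Local Open Scope ring_scope.

Section GradedDefs.
Variable R : comPzRingType.

(* [Vg n v] : v is homogeneous of degree n.  V = (+)_{n>=0} V_n internally: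
   each V_n is an R-submodule, every v is a finite sum of homogeneous
   components, and such a decomposition is unique. *)
Definition graded_module (V : lmodType R) (Vg : nat -> V -> Prop) : Prop :=
  [/\ (forall n, Vg n 0),
      (forall n u v, Vg n u -> Vg n v -> Vg n (u + v)),
      (forall n (r : R) v, Vg n v -> Vg n (r *: v)),
      (forall v, exists N (c : 'I_N -> V),
           (forall i : 'I_N, Vg i (c i)) /\ v = \sum_(i < N) c i) &
      (forall N (c : 'I_N -> V), (forall i : 'I_N, Vg i (c i)) ->
           \sum_(i < N) c i = 0 -> forall i, c i = 0)].

Definition graded_algebra (A : algType R) (Ag : nat -> A -> Prop) : Prop :=
  [/\ graded_module Ag, Ag 0%N 1 &
      forall m n a b, Ag m a -> Ag n b -> Ag (m + n)%N (a * b)].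

Variable A : algType R.

Definition left_action (N : zmodType) (act : A -> N -> N) : Prop :=
  [/\ (forall n, act 1 n = n),
      (forall a b n, act (a * b) n = act a (act b n)),
      (forall a b n, act (a + b) n = act a n + act b n) &
      (forall a n n', act a (n + n') = act a n + act a n')].

Definition right_action (N : zmodType) (act : N -> A -> N) : Prop :=
  [/\ (forall n, act n 1 = n),
      (forall a b n, act n (a * b) = act (act n a) b),
      (forall a b n, act n (a + b) = act n a + act n b) &
      (forall a n n', act (n + n') a = act n a + act n' a)].

Definition bimodule (M : lmodType R) (lact : A -> M -> M) (ract : M -> A -> M) :=
  [/\ left_action lact, right_action ract,
      (forall a m b, ract (lact a m) b = lact a (ract m b)),
      (forall (r : R) m, r *: m = lact (r%:A) m) &
      (forall (r : R) m, r *: m = ract m (r%:A))].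

Definition graded_bimodule (Ag : nat -> A -> Prop) (M : lmodType R)
    (Mg : nat -> M -> Prop) (lact : A -> M -> M) (ract : M -> A -> M) :=
  [/\ bimodule lact ract, graded_module Mg,
      (forall i j a m, Ag i a -> Mg j m -> Mg (i + j)%N (lact a m)) &
      (forall i j m a, Mg i m -> Ag j a -> Mg (i + j)%N (ract m a))].

(* M is free as a left A-module on X via iota : the induced left A-linear
   map A (x)_R X -> M, a (x) x |-> a . iota x, is an isomorphism;
   stated by the universal property of A (x)_R X. *)
Definition left_free_on (M : lmodType R) (lact : A -> M -> M)
    (X : lmodType R) (iota : X -> M) : Prop :=
  (forall x y, iota (x + y) = iota x + iota y) /\
  (forall (r : R) x, iota (r *: x) = r *: iota x) /\
  forall (N : zmodType) (act : A -> N -> N), left_action act ->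
  forall f : X -> N, (forall x y, f (x + y) = f x + f y) ->
    (forall (r : R) x, f (r *: x) = act (r%:A) (f x)) ->
    (exists g : M -> N, [/\ (forall m m', g (m + m') = g m + g m'),
                            (forall a m, g (lact a m) = act a (g m)) &
                            (forall x, g (iota x) = f x)]) /\
    (forall g1 g2 : M -> N,
        (forall m m', g1 (m + m') = g1 m + g1 m') ->
        (forall a m, g1 (lact a m) = act a (g1 m)) ->
        (forall x, g1 (iota x) = f x) ->
        (forall m m', g2 (m + m') = g2 m + g2 m') ->
        (forall a m, g2 (lact a m) = act a (g2 m)) ->
        (forall x, g2 (iota x) = f x) ->
        forall m, g1 m = g2 m).

(* M is free as a right A-module on Y via iota : Y (x)_R A -> M,
   y (x) a |-> iota y . a, is an isomorphism (universal property). *)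
Definition right_free_on (M : lmodType R) (ract : M -> A -> M)
    (Y : lmodType R) (iota : Y -> M) : Prop :=
  (forall x y, iota (x + y) = iota x + iota y) /\
  (forall (r : R) x, iota (r *: x) = r *: iota x) /\
  forall (N : zmodType) (act : N -> A -> N), right_action act ->
  forall f : Y -> N, (forall x y, f (x + y) = f x + f y) ->
    (forall (r : R) x, f (r *: x) = act (f x) (r%:A)) ->
    (exists g : M -> N, [/\ (forall m m', g (m + m') = g m + g m'),
                            (forall a m, g (ract m a) = act (g m) a) &
                            (forall x, g (iota x) = f x)]) /\
    (forall g1 g2 : M -> N,
        (forall m m', g1 (m + m') = g1 m + g1 m') ->
        (forall a m, g1 (ract m a) = act (g1 m) a) ->
        (forall x, g1 (iota x) = f x) ->
        (forall m m', g2 (m + m') = g2 m + g2 m') ->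
        (forall a m, g2 (ract m a) = act (g2 m) a) ->
        (forall x, g2 (iota x) = f x) ->
        forall m, g1 m = g2 m).

Definition degree_preserving (X M : lmodType R) (Xg : nat -> X -> Prop)
    (Mg : nat -> M -> Prop) (iota : X -> M) : Prop :=
  forall n x, Xg n x -> Mg n (iota x).

(* membership in (the image in M ~ A (x) X of) A (x) X_{<m}:
   finite sums  sum_i a_i . iota x_i  with x_i homogeneous of degree < m *)
Definition in_AX_lt (M : lmodType R) (lact : A -> M -> M) (X : lmodType R)
    (Xg : nat -> X -> Prop) (iota : X -> M) (m : nat) (v : M) : Prop :=
  exists k (a : 'I_k -> A) (x : 'I_k -> X),
    (forall i, exists j, (j < m)%N /\ Xg j (x i)) /\
    v = \sum_(i < k) lact (a i) (iota (x i)).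

End GradedDefs.

From HB Require Import structures.
From mathcomp Require Import all_boot all_order all_algebra.
From mathcomp Require Import boolp zify.
Set Implicit Arguments.
Unset Strict Implicit.
Unset Printing Implicit Defensive.
Import GRing.Theory.
Local Open Scope ring_scope.

(* Write [tw_j] for the sign twist [a |-> \sum_n (-1)^(j n) a_n] of [A], an
   involution. For [y] of degree [j] the hypothesis says [y . b = tw_j b . y]
   modulo [F_j = A . X_{<j}], hence [c . y = y . tw_j c - d] with [d] in [F_j].
   A right linear [g : M -> N] extending [f : X -> N] must therefore satisfy
   [g (c . y) = f y . tw_j c - g d], which determines [g] on [F_{j+1}] from its
   values on [F_j]; this gives uniqueness. For existence the recursion is run
   through the universal property of the left-free module [M = A (x) X]: stage
   [j] is an additive map [M -> N] that is correct on [F_j], the stages are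
   compatible, and right linearity follows by the same induction on [j]. *)

Section MorphAdd.
Variables (U V : zmodType) (h : U -> V).
Hypothesis hD : {morph h : x y / x + y}.

Lemma morph_add0 : h 0 = 0.
Proof. by apply: (addrI (h 0)); rewrite -hD !addr0. Qed.

Lemma morph_addB : {morph h : x y / x - y}.
Proof.
move=> x y; rewrite hD; congr (_ + _); apply: (addrI (h y)).
by rewrite -hD !subrr morph_add0.
Qed.

Lemma morph_add_sum I r (P : pred I) F :
  h (\sum_(i <- r | P i) F i) = \sum_(i <- r | P i) h (F i).
Proof. exact: (big_morph h hD morph_add0). Qed.

End MorphAdd.

Lemma sumr_ord_widen0 (V : nmodType) (F : nat -> V) n m : (n <= m)%N ->
  (forall i, (n <= i)%N -> F i = 0) -> \sum_(i < m) F i = \sum_(i < n) F i.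
Proof.
move=> le_nm F0; rewrite -!(big_mkord xpredT) (big_cat_nat (leq0n n) le_nm) /=.
rewrite [X in _ + X]big1_seq ?addr0 // => i /andP[_].
by rewrite mem_index_iota => /andP[le_ni _]; exact: F0.
Qed.

Record addfun (U V : zmodType) := Addfun {
  addfun_val :> U -> V;
  addfunD : {morph addfun_val : x y / x + y} }.

HB.instance Definition _ (U V : zmodType) := gen_eqMixin (addfun U V).
HB.instance Definition _ (U V : zmodType) := gen_choiceMixin (addfun U V).

Section AddfunZmodule.
Variables U V : zmodType.
Implicit Types f g : addfun U V.

Lemma addfun_ext f g : f =1 g -> f = g.
Proof.
case: f g => f fD [g gD] /= /funext fg; subst g.
by congr Addfun; exact: Prop_irrelevance.
Qed.

Definition addfun0 : addfun U V :=
  @Addfun U V (fun=> 0) (fun _ _ => esym (addr0 0)).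

Fact addfun_add_morph f g : {morph (fun x => f x + g x) : x y / x + y}.
Proof. by move=> x y; rewrite !addfunD addrACA. Qed.
Definition addfun_add f g := Addfun (addfun_add_morph f g).

Fact addfun_opp_morph f : {morph (fun x => - f x) : x y / x + y}.
Proof. by move=> x y; rewrite addfunD opprD. Qed.
Definition addfun_opp f := Addfun (addfun_opp_morph f).

Fact addfun_addA : associative addfun_add.
Proof. by move=> f g k; apply: addfun_ext => x /=; rewrite addrA. Qed.
Fact addfun_addC : commutative addfun_add.
Proof. by move=> f g; apply: addfun_ext => x /=; rewrite addrC. Qed.
Fact addfun_add0 : left_id addfun0 addfun_add.
Proof. by move=> f; apply: addfun_ext => x /=; rewrite add0r. Qed.
Fact addfun_addN : left_inverse addfun0 addfun_opp addfun_add.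
Proof. by move=> f; apply: addfun_ext => x /=; rewrite addNr. Qed.

HB.instance Definition _ :=
  GRing.isZmodule.Build (addfun U V) addfun_addA addfun_addC addfun_add0 addfun_addN.

End AddfunZmodule.

Section GradedComponents.
Variables (R : comPzRingType) (V : lmodType R) (Vg : nat -> V -> Prop).
Hypothesis Vgr : graded_module Vg.

Lemma graded0 n : Vg n 0.
Proof. by case: Vgr. Qed.

Lemma gradedD n u v : Vg n u -> Vg n v -> Vg n (u + v).
Proof. by case: Vgr => _ + _ _ _; apply. Qed.

Lemma gradedZ n r v : Vg n v -> Vg n (r *: v).
Proof. by case: Vgr => _ _ + _ _; apply. Qed.

Lemma gradedB n u v : Vg n u -> Vg n v -> Vg n (u - v).
Proof. by move=> Hu Hv; rewrite -scaleN1r; apply/gradedD/gradedZ. Qed.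

Lemma graded_decomposition v : exists Nc : nat * (nat -> V),
  [/\ forall i, Vg i (Nc.2 i), forall i, (Nc.1 <= i)%N -> Nc.2 i = 0 &
      v = \sum_(i < Nc.1) Nc.2 i].
Proof.
case: Vgr => _ _ _ + _ => /(_ v) [N [c [Hc ->]]].
exists (N, fun i => oapp c 0 (insub i)); split => /= [i|i le_Ni|].
- by case: insubP => [j _ <-|_] /=; [exact: Hc|exact: graded0].
- by rewrite insubN // -leqNgt.
- by apply: eq_bigr => i _; rewrite valK.
Qed.

Definition grade_bound v := (sval (cid (graded_decomposition v))).1.
Definition component n v := (sval (cid (graded_decomposition v))).2 n.

Lemma component_homog n v : Vg n (component n v).
Proof. by case: (svalP (cid (graded_decomposition v))). Qed.

Lemma component_eq0 n v : (grade_bound v <= n)%N -> component n v = 0.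
Proof. by case: (svalP (cid (graded_decomposition v))) => _ + _; apply. Qed.

Lemma sum_components v K :
  (grade_bound v <= K)%N -> v = \sum_(i < K) component i v.
Proof.
move=> le_bK; rewrite (sumr_ord_widen0 le_bK (fun i => @component_eq0 i v)).
by case: (svalP (cid (graded_decomposition v))).
Qed.

Lemma componentE (c : nat -> V) N v n : (forall i, Vg i (c i)) ->
  (forall i, (N <= i)%N -> c i = 0) -> v = \sum_(i < N) c i -> component n v = c n.
Proof.
move=> Hc c0 Ev; pose K := (N + grade_bound v + n.+1)%N.
have Hdiff i : Vg i (component i v - c i) by apply: gradedB (component_homog _ _) _.
case: Vgr => _ _ _ _ /(_ K (fun i : 'I_K => component i v - c i) (fun i => Hdiff i)).
rewrite sumrB -sum_components; last by rewrite /K; lia.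
rewrite (sumr_ord_widen0 _ c0) -?Ev ?subrr; last by rewrite /K; lia.
have lt_nK : (n < K)%N by rewrite /K; lia.
by move=> /(_ erefl (Ordinal lt_nK)) /eqP; rewrite subr_eq0 => /eqP.
Qed.

Lemma componentD n u v : component n (u + v) = component n u + component n v.
Proof.
apply: (@componentE (fun i => component i u + component i v)
                   (grade_bound u + grade_bound v)) => [i|i le_i|].
- exact/gradedD/component_homog/component_homog.
- by rewrite !component_eq0 ?addr0 //; lia.
- by rewrite big_split -!sum_components //; lia.
Qed.

Lemma componentZ n r v : component n (r *: v) = r *: component n v.
Proof.
apply: (@componentE (fun i => r *: component i v) (grade_bound v)) => [i|i le_i|].
- exact/gradedZ/component_homog.
- by rewrite component_eq0 ?scaler0.
- by rewrite -scaler_sumr -sum_components.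
Qed.

Lemma component_homogE n m v : Vg n v -> component m v = if m == n then v else 0.
Proof.
move=> Hv; apply: (@componentE (fun i => if i == n then v else 0) n.+1) => [i|i lt_ni|].
- by case: eqP => [->|_] //; exact: graded0.
- by case: eqP => // eq_in; rewrite eq_in ltnn in lt_ni.
- rewrite big_ord_recr /= eqxx big1 ?add0r // => i _.
  by case: eqP => // eq_in; have := ltn_ord i; rewrite eq_in ltnn.
Qed.

Definition twist j v := \sum_(i < grade_bound v) (-1) ^+ (j * i) *: component i v.

Lemma twist_widen j v K : (grade_bound v <= K)%N ->
  twist j v = \sum_(i < K) (-1) ^+ (j * i) *: component i v.
Proof.
move=> le_bK; have F0 i : (grade_bound v <= i)%N -> (-1) ^+ (j * i) *: component i v = 0.
  by move=> /component_eq0->; rewrite scaler0.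
by rewrite (sumr_ord_widen0 le_bK F0).
Qed.

Lemma component_twist j n v : component n (twist j v) = (-1) ^+ (j * n) *: component n v.
Proof.
apply: (@componentE (fun i => (-1) ^+ (j * i) *: component i v) (grade_bound v))
  => [i|i le_i|//].
- exact/gradedZ/component_homog.
- by rewrite component_eq0 ?scaler0.
Qed.

Lemma twist_homog j n v : Vg n v -> twist j v = (-1) ^+ (j * n) *: v.
Proof.
move=> Hv; have lt_nK : (n < grade_bound v + n.+1)%N by lia.
rewrite (twist_widen j (leq_addr n.+1 (grade_bound v))) (bigD1 (Ordinal lt_nK)) //=.
rewrite (component_homogE _ Hv) eqxx big1 ?addr0 // => i /eqP ne_in.
rewrite (component_homogE _ Hv); case: eqP => [eq_in|_]; last by rewrite scaler0.
by case: ne_in; apply: val_inj.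
Qed.

Lemma twistD j u v : twist j (u + v) = twist j u + twist j v.
Proof.
rewrite !(@twist_widen j _ (grade_bound u + grade_bound v + grade_bound (u + v))); try lia.
by rewrite -big_split; apply: eq_bigr => i _; rewrite componentD scalerDr.
Qed.

Lemma twistZ j r v : twist j (r *: v) = r *: twist j v.
Proof.
rewrite !(@twist_widen j _ (grade_bound v + grade_bound (r *: v))); try lia.
by rewrite scaler_sumr; apply: eq_bigr => i _; rewrite componentZ !scalerA mulrC.
Qed.

Lemma twistK j : involutive (twist j).
Proof.
move=> v; rewrite (@twist_widen j _ (grade_bound v + grade_bound (twist j v))); last lia.
rewrite [RHS](@sum_components v (grade_bound v + grade_bound (twist j v))); last lia.
by apply: eq_bigr => i _; rewrite component_twist scalerA -expr2 sqrr_sign scale1r.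
Qed.

End GradedComponents.

Section RightFree.
Variables (R : comPzRingType) (A : algType R) (Ag : nat -> A -> Prop)
  (M : lmodType R) (lact : A -> M -> M) (ract : M -> A -> M)
  (X : lmodType R) (Xg : nat -> X -> Prop) (iota : X -> M).
Hypotheses (Agr : graded_module Ag) (Mbi : bimodule lact ract)
  (Xgr : graded_module Xg) (Mfree : left_free_on lact iota).
Hypothesis ract_iota_twist : forall (m n : nat) (b : A) (x : X), Xg m x -> Ag n b ->
  in_AX_lt lact Xg iota m (ract (iota x) b - ((-1) ^+ (m * n) : R) *: lact b (iota x)).

Lemma lact1 m : lact 1 m = m. Proof. by case: Mbi => -[]. Qed.
Lemma lactM a b m : lact (a * b) m = lact a (lact b m). Proof. by case: Mbi => -[]. Qed.
Lemma lactDl a b m : lact (a + b) m = lact a m + lact b m. Proof. by case: Mbi => -[]. Qed.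
Lemma lactDr a : {morph lact a : m m' / m + m'}. Proof. by move=> m m'; case: Mbi => -[]. Qed.
Lemma ract1 m : ract m 1 = m. Proof. by case: Mbi => _ []. Qed.
Lemma ractM a b m : ract m (a * b) = ract (ract m a) b. Proof. by case: Mbi => _ []. Qed.
Lemma ractDr a b m : ract m (a + b) = ract m a + ract m b. Proof. by case: Mbi => _ []. Qed.
Lemma ractDl a : {morph ract^~ a : m m' / m + m'}.
Proof. by move=> m m'; case: Mbi => _ []. Qed.
Lemma scale_lact r m : r *: m = lact r%:A m. Proof. by case: Mbi. Qed.
Lemma scale_ract r m : r *: m = ract m r%:A. Proof. by case: Mbi. Qed.
Lemma iotaD : {morph iota : x y / x + y}. Proof. by move=> x y; case: Mfree. Qed.
Lemma iotaZ r x : iota (r *: x) = r *: iota x. Proof. by case: Mfree => _ []. Qed.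

Local Notation tw := (twist Agr).

Inductive filt (j : nat) : M -> Prop :=
| filt0 : filt j 0
| filtD u v : filt j u -> filt j v -> filt j (u + v)
| filt_gen i c x : (i < j)%N -> Xg i x -> filt j (lact c (iota x)).

Lemma filt_mono i j v : (i <= j)%N -> filt i v -> filt j v.
Proof.
move=> le_ij; elim=> [|u w _ Hu _ Hw|i' c x lt_i'i Hx]; first exact: filt0.
- exact: filtD.
- exact: filt_gen (leq_trans lt_i'i le_ij) Hx.
Qed.

Lemma filt_sum j I r (P : pred I) F :
  (forall i, P i -> filt j (F i)) -> filt j (\sum_(i <- r | P i) F i).
Proof. by move=> HF; apply: big_ind => //; [exact: filt0 | exact: filtD]. Qed.

Lemma filt_in_AX_lt j v : in_AX_lt lact Xg iota j v -> filt j v.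
Proof.
case=> k [a [x [Hx ->]]]; apply: filt_sum => i _.
by case: (Hx i) => i' [lt_i'j Hi']; apply: filt_gen Hi'.
Qed.

Definition defect j y a := ract (iota y) a - lact (tw j a) (iota y).

Lemma defectDl j a : {morph defect j ^~ a : y z / y + z}.
Proof. by move=> y z; rewrite /defect iotaD ractDl lactDr opprD addrACA. Qed.

Lemma defectDr j y : {morph defect j y : a b / a + b}.
Proof. by move=> a b; rewrite /defect twistD ractDr lactDl opprD addrACA. Qed.

Lemma defect_balanced j y r a : defect j (r *: y) a = defect j y (a * r%:A).
Proof.
rewrite /defect iotaZ mulr_algr twistZ; congr (_ - _).
- by rewrite [r *: iota y]scale_ract -ractM mulr_algl.
- by rewrite [r *: iota y]scale_lact -lactM mulr_algr.
Qed.

Lemma defect_filt j y a : Xg j y -> filt j (defect j y a).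
Proof.
move=> Hy; rewrite (sum_components (leqnn (grade_bound Agr a))).
rewrite (morph_add_sum (defectDr j y)); apply: filt_sum => n _.
have Han := component_homog Agr n a.
apply: filt_in_AX_lt; have := ract_iota_twist Hy Han.
by rewrite /defect (twist_homog _ _ Han) scale_lact -lactM mulr_algl.
Qed.

Lemma lact_iota_twist j y c :
  lact c (iota y) = ract (iota y) (tw j c) - defect j y (tw j c).
Proof. by rewrite /defect twistK opprB addrC subrK. Qed.

Section LeftUniversal.
Variable N : zmodType.

(* [Hom(A, N)] is a left [A]-module via [(a . phi) c = phi (c a)]; through it
   the left universal property turns balanced maps [X -> A -> N] into
   additive maps [M -> N]. *)
Fact addfun_ract_morph (a : A) (phi : addfun A N) :
  {morph (fun c => phi (c * a)) : c d / c + d}.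
Proof. by move=> c d; rewrite mulrDl addfunD. Qed.
Definition addfun_ract a phi := Addfun (addfun_ract_morph a phi).

Lemma addfun_ract_left_action : left_action addfun_ract.
Proof.
split=> [phi|a b phi|a b phi|a phi psi]; apply: addfun_ext => c //=.
- by rewrite mulr1.
- by rewrite mulrA.
- by rewrite mulrDr addfunD.
Qed.

Definition balanced (k : X -> A -> N) :=
  [/\ forall c, {morph k^~ c : x y / x + y},
      forall x, {morph k x : c d / c + d} &
      forall r x c, k (r *: x) c = k x (c * r%:A)].

Lemma balanced_lift_ex k : exists g : M -> N, balanced k ->
  {morph g : m m' / m + m'} /\ forall c x, g (lact c (iota x)) = k x c.
Proof.
have [[kD kD' kbal]|] := lem (balanced k); last by exists (fun=> 0).
case: Mfree => _ [_ /(_ _ _ addfun_ract_left_action (fun x => Addfun (kD' x)))].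
case=> [x y|r x|[g [gD g_lact g_iota]] _].
- by apply: addfun_ext => c /=; apply: kD.
- by apply: addfun_ext => c /=; apply: kbal.
exists (fun m => g m 1) => _; split => [m m'|c x]; first by rewrite gD.
by rewrite g_lact /= mul1r g_iota.
Qed.

Definition lift k : M -> N := sval (cid (balanced_lift_ex k)).

Lemma liftD k : balanced k -> {morph lift k : m m' / m + m'}.
Proof. by move=> /(svalP (cid (balanced_lift_ex k))) []. Qed.

Lemma lift_lact k c x : balanced k -> lift k (lact c (iota x)) = k x c.
Proof. by move=> /(svalP (cid (balanced_lift_ex k))) [_]; apply. Qed.

Fact lact_addfun_morph (g : M -> N) (gD : {morph g : m m' / m + m'}) m :
  {morph (fun c => g (lact c m)) : c d / c + d}.
Proof. by move=> c d; rewrite lactDl gD. Qed.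
Definition lact_addfun g gD m := Addfun (@lact_addfun_morph g gD m).

Lemma lact_addfunD g (gD : {morph g : m m' / m + m'}) m m' :
  lact_addfun gD (m + m') = lact_addfun gD m + lact_addfun gD m'.
Proof. by apply: addfun_ext => c /=; rewrite lactDr gD. Qed.

Lemma lact_addfun_lact g (gD : {morph g : m m' / m + m'}) a m :
  lact_addfun gD (lact a m) = addfun_ract a (lact_addfun gD m).
Proof. by apply: addfun_ext => c /=; rewrite lactM. Qed.

Lemma left_free_ext (g1 g2 : M -> N) :
  {morph g1 : m m' / m + m'} -> {morph g2 : m m' / m + m'} ->
  (forall c x, g1 (lact c (iota x)) = g2 (lact c (iota x))) -> g1 =1 g2.
Proof.
move=> g1D g2D g12 m.
case: Mfree => _ [_ /(_ _ _ addfun_ract_left_action (fun x => lact_addfun g1D (iota x)))].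
case=> [x y|r x|_ /(_ (lact_addfun g1D) (lact_addfun g2D))].
- by apply: addfun_ext => c /=; rewrite iotaD lactDr g1D.
- by apply: addfun_ext => c /=; rewrite iotaZ scale_lact -lactM.
move=> /(_ (lact_addfunD g1D) (lact_addfun_lact g1D) (fun=> erefl)).
move=> /(_ (lact_addfunD g2D) (lact_addfun_lact g2D)).
move=> /(_ _ m) /(congr1 (fun phi : addfun A N => phi 1)) /=; rewrite !lact1; apply.
by move=> x; apply: addfun_ext => c /=; rewrite g12.
Qed.

Lemma left_free_ext_homog (g1 g2 : M -> N) :
  {morph g1 : m m' / m + m'} -> {morph g2 : m m' / m + m'} ->
  (forall j c y, Xg j y -> g1 (lact c (iota y)) = g2 (lact c (iota y))) -> g1 =1 g2.
Proof.
move=> g1D g2D g12; apply: left_free_ext => // c x.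
rewrite (sum_components (leqnn (grade_bound Xgr x))) (morph_add_sum iotaD).
rewrite (morph_add_sum (lactDr c)) !(morph_add_sum g1D, morph_add_sum g2D).
by apply: eq_bigr => i _; apply: g12 (component_homog Xgr i x).
Qed.

Lemma filt_ext (g1 g2 : M -> N) j :
  {morph g1 : m m' / m + m'} -> {morph g2 : m m' / m + m'} ->
  (forall i c x, (i < j)%N -> Xg i x -> g1 (lact c (iota x)) = g2 (lact c (iota x))) ->
  forall v, filt j v -> g1 v = g2 v.
Proof.
move=> g1D g2D g12 v; elim=> [|u w _ Hu _ Hw|]; last exact: g12.
- by rewrite (morph_add0 g1D) (morph_add0 g2D).
- by rewrite g1D g2D Hu Hw.
Qed.

(* Since [c . y = y . tw_j c - defect] with the defect in [F_j], maps that
   agree on every [iota y . e] agree everywhere, by induction on [j]. *)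
Lemma ract_iota_ext (g1 g2 : M -> N) :
  {morph g1 : m m' / m + m'} -> {morph g2 : m m' / m + m'} ->
  (forall j y e, Xg j y -> g1 (ract (iota y) e) = g2 (ract (iota y) e)) -> g1 =1 g2.
Proof.
move=> g1D g2D g12; apply: left_free_ext_homog => // j.
elim/ltn_ind: j => j IH c y Hy.
rewrite (lact_iota_twist j) (morph_addB g1D) (morph_addB g2D) (g12 j) //.
by congr (_ - _); apply: (filt_ext g1D g2D) (defect_filt _ Hy) => i c' x /IH; apply.
Qed.

End LeftUniversal.

Section RightLift.
Variables (N : zmodType) (act : N -> A -> N) (f : X -> N).
Hypotheses (act_right : right_action act) (fD : {morph f : x y / x + y})
  (fZ : forall r x, f (r *: x) = act (f x) r%:A).

Lemma act1 n : act n 1 = n. Proof. by case: act_right. Qed.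
Lemma actM a b n : act n (a * b) = act (act n a) b. Proof. by case: act_right. Qed.
Lemma actDr a b n : act n (a + b) = act n a + act n b. Proof. by case: act_right. Qed.
Lemma actDl a : {morph act^~ a : n n' / n + n'}.
Proof. by move=> n n'; case: act_right. Qed.

Definition forced_value (h : M -> N) j y c := act (f y) (tw j c) - h (defect j y (tw j c)).

Lemma forced_value_balanced h j : {morph h : m m' / m + m'} -> balanced (forced_value h j).
Proof.
move=> hD; split=> [c y z|y c d|r y c].
- by rewrite /forced_value fD actDl defectDl hD opprD addrACA.
- by rewrite /forced_value twistD actDr defectDr hD opprD addrACA.
- by rewrite /forced_value defect_balanced fZ -actM !mulr_algr twistZ mulr_algl.
Qed.

Lemma balanced0 (k : X -> A -> N) c : balanced k -> k 0 c = 0.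
Proof. by case=> /(_ c) kD _ _; apply: morph_add0 kD. Qed.

Definition homog_sum (F : nat -> X -> A -> N) x c :=
  \sum_(i < grade_bound Xgr x) F i (component Xgr i x) c.

Lemma homog_sum_widen F x c K : (forall i, balanced (F i)) ->
  (grade_bound Xgr x <= K)%N -> homog_sum F x c = \sum_(i < K) F i (component Xgr i x) c.
Proof.
move=> Fbal le_bK; have F0 i : (grade_bound Xgr x <= i)%N -> F i (component Xgr i x) c = 0.
  by move=> /component_eq0->; exact: balanced0.
by rewrite (sumr_ord_widen0 le_bK F0).
Qed.

Lemma homog_sum_balanced F : (forall i, balanced (F i)) -> balanced (homog_sum F).
Proof.
move=> Fbal; split=> [c x y|x c d|r x c].
- pose K := (grade_bound Xgr x + grade_bound Xgr y + grade_bound Xgr (x + y))%N.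
  rewrite !(@homog_sum_widen _ _ _ K) // /K; try lia.
  by rewrite -big_split; apply: eq_bigr => i _; rewrite componentD; case: (Fbal i) => ->.
- by rewrite /homog_sum -big_split; apply: eq_bigr => i _; case: (Fbal i) => _ ->.
- pose K := (grade_bound Xgr x + grade_bound Xgr (r *: x))%N.
  rewrite !(@homog_sum_widen _ _ _ K) // /K; try lia.
  by apply: eq_bigr => i _; rewrite componentZ; case: (Fbal i) => _ _ ->.
Qed.

Lemma homog_sumE F j y c : (forall i, balanced (F i)) -> Xg j y -> homog_sum F y c = F j y c.
Proof.
move=> Fbal Hy; have lt_jK : (j < grade_bound Xgr y + j.+1)%N by lia.
rewrite (@homog_sum_widen _ _ _ (grade_bound Xgr y + j.+1)) //; last lia.
rewrite (bigD1 (Ordinal lt_jK)) //= (component_homogE _ _ Hy) eqxx big1 ?addr0 //.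
move=> i /eqP ne_ij.
rewrite (component_homogE _ _ Hy); case: eqP => [eq_ij|_]; last exact: balanced0.
by case: ne_ij; apply: val_inj.
Qed.

Definition forced_values_upto h m i : X -> A -> N :=
  if (i <= m)%N then forced_value h i else fun _ _ => 0.

Lemma forced_values_upto_balanced h m : {morph h : v w / v + w} ->
  forall i, balanced (forced_values_upto h m i).
Proof.
move=> hD i; rewrite /forced_values_upto; case: ifP => _.
  exact: forced_value_balanced.
by split=> [c x y|x c d|] //; rewrite addr0.
Qed.

(* [stage m] coincides on [F_m] with the right linear extension of [f]. *)
Fixpoint stage m : M -> N :=
  if m is m'.+1 then lift (homog_sum (forced_values_upto (stage m') m')) else fun=> 0.

Lemma stageD m : {morph stage m : v w / v + w}.
Proof.
elim: m => [|m IH] v w /=; first by rewrite addr0.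
by apply/liftD/homog_sum_balanced/forced_values_upto_balanced.
Qed.

Lemma stageS_homog m i c y : (i <= m)%N -> Xg i y ->
  stage m.+1 (lact c (iota y)) = forced_value (stage m) i y c.
Proof.
move=> le_im Hy /=; have Fbal := forced_values_upto_balanced m (@stageD m).
rewrite lift_lact ?(homog_sumE _ _ Hy) /forced_values_upto ?le_im //.
exact: homog_sum_balanced.
Qed.

Lemma stageS_filt m v : filt m v -> stage m.+1 v = stage m v.
Proof.
elim: m v => [|m IH] v; apply: filt_ext => [||i c x lt_im Hx]; try exact: stageD.
  by rewrite ltn0 in lt_im.
rewrite (@stageS_homog m.+1 i) ?(@stageS_homog m i) // ?(ltnW lt_im) //.
by rewrite /forced_value IH //; apply: filt_mono (defect_filt _ Hx).
Qed.

Lemma stage_filt i m v : (i <= m)%N -> filt i v -> stage m v = stage i v.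
Proof.
elim: m => [|m IH]; first by rewrite leqn0 => /eqP->.
rewrite leq_eqVlt => /orP[/eqP<-//|]; rewrite ltnS => le_im Fv.
by rewrite stageS_filt ?IH //; apply: filt_mono Fv.
Qed.

Definition rlift := lift (homog_sum (fun i => forced_value (stage i) i)).

Lemma rlift_balanced : balanced (homog_sum (fun i => forced_value (stage i) i)).
Proof. by apply: homog_sum_balanced => i; apply/forced_value_balanced/stageD. Qed.

Lemma rliftD : {morph rlift : v w / v + w}.
Proof. exact: liftD rlift_balanced. Qed.

Lemma rlift_homog j c y : Xg j y -> rlift (lact c (iota y)) = forced_value (stage j) j y c.
Proof.
move=> Hy; rewrite /rlift lift_lact; last exact: rlift_balanced.
by rewrite (homog_sumE _ _ Hy) // => i; apply/forced_value_balanced/stageD.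
Qed.

Lemma rlift_filt j v : filt j v -> rlift v = stage j v.
Proof.
apply: filt_ext => [||i c x lt_ij Hx]; [exact: rliftD | exact: stageD |].
case: j lt_ij => // j lt_ij.
rewrite (rlift_homog c Hx) (stageS_homog c (lt_ij : (i <= j)%N) Hx).
by rewrite /forced_value (@stage_filt i j) //; apply: defect_filt.
Qed.

Lemma rlift_ract_iota_homog j y e : Xg j y -> rlift (ract (iota y) e) = act (f y) e.
Proof.
move=> Hy; have -> : ract (iota y) e = defect j y e + lact (tw j e) (iota y).
  by rewrite /defect subrK.
rewrite rliftD (rlift_homog _ Hy) /forced_value twistK.
by rewrite (rlift_filt (defect_filt _ Hy)) addrC subrK.
Qed.

Lemma rlift_ract_iota x e : rlift (ract (iota x) e) = act (f x) e.
Proof.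
rewrite (sum_components (leqnn (grade_bound Xgr x))) (morph_add_sum iotaD) (morph_add_sum fD).
rewrite (morph_add_sum (ractDl e)) (morph_add_sum rliftD) (morph_add_sum (actDl e)).
by apply: eq_bigr => i _; apply: rlift_ract_iota_homog (component_homog Xgr i x).
Qed.

Lemma rlift_ract b m : rlift (ract m b) = act (rlift m) b.
Proof.
apply: (@ract_iota_ext _ (fun m => rlift (ract m b)) (fun m => act (rlift m) b))
  => [v w|v w|j y e _] /=.
- by rewrite ractDl rliftD.
- by rewrite rliftD actDl.
- by rewrite -ractM !rlift_ract_iota actM.
Qed.

Lemma rlift_iota x : rlift (iota x) = f x.
Proof. by rewrite -[iota x]ract1 rlift_ract_iota act1. Qed.

End RightLift.

Lemma right_free_on_iota : right_free_on ract iota.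
Proof.
split; first exact: iotaD; split; first exact: iotaZ.
move=> N act act_right f fD fZ; split.
  by exists (rlift act f); split; [exact: rliftD | exact: rlift_ract | exact: rlift_iota].
move=> g1 g2 g1D g1R g1f g2D g2R g2f; apply: ract_iota_ext => // j y e _.
by rewrite g1R g2R g1f g2f.
Qed.

End RightFree.

Theorem lemma7p11 (R : comPzRingType) (A : algType R) (Ag : nat -> A -> Prop)
  (M : lmodType R) (Mg : nat -> M -> Prop)
  (lact : A -> M -> M) (ract : M -> A -> M)
  (X : lmodType R) (Xg : nat -> X -> Prop) (iota : X -> M) :
  graded_algebra Ag ->
  graded_bimodule Ag Mg lact ract ->
  graded_module Xg ->
  degree_preserving Xg Mg iota ->
  left_free_on lact iota ->
  (forall (m n : nat) (a b : A) (x : X), Xg m x -> Ag n b ->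
     in_AX_lt lact Xg iota m
       (ract (lact a (iota x)) b - ((-1) ^+ (m * n) : R) *: lact (a * b) (iota x))) ->
  exists (Y : lmodType R) (Yg : nat -> Y -> Prop) (iota' : Y -> M),
    [/\ graded_module Yg, degree_preserving Yg Mg iota' & right_free_on ract iota'].
Proof.
move=> [Agr _ _] [Mbi _ _ _] Xgr iota_deg Mfree twist_hyp.
exists X, Xg, iota; split => //.
apply: (right_free_on_iota Agr Mbi Xgr Mfree) => m n b x Hx Hb.
by have := twist_hyp m n 1 b x Hx Hb; rewrite (lact1 Mbi) mul1r.
Qed.
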